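(* Let $n\geq 2$, let $\mathbf{K},\mathbf{L}\in\mathbb{R}^{n\times n}$ be skew-symmetric matrices and let $S_1,S_2:\mathbb{R}^n\to\mathbb{R}$ be smooth functions. Consider the stochastic Runge-Kutta method described in the context (with $r$ stages in time, coefficients $a_{kj},b_k$, and $s$ stages in space, coefficients $\widetilde{a}_{mn},\widetilde{b}_m$), applied with time step $\tau>0$ and space step $h>0$ to $$\mathbf{K}\,{\rm d}_t z+\mathbf{L}z_x\,{\rm d}t=\nabla_z S_1(z)\,{\rm d}t+\nabla_z S_2(z)\circ {\rm d}W(t).$$ Assume that $$b_kb_j-b_ka_{kj}-b_ja_{jk}=0\quad\text{and}\quad \widetilde{b}_m\widetilde{b}_n-\widetilde{b}_m\widetilde{a}_{mn}-\widetilde{b}_n\widetilde{a}_{nm}=0$$ for all $k,j=1,\dots,r$ and all $m,n=1,\dots,s$. Then on every space-time cell (for all $p=0,1,\dots,P$ and $i=0,1,\dots,I$) the method satisfies, almost surely, the discrete stochastic multi-symplectic conservation law $$\frac{\omega^{p+1}-\omega^{p}}{\tau}+\frac{\kappa_{i+1}-\kappa_{i}}{h}=0,$$ where $$\omega^p=\frac{1}{2}\sum_{m=1}^s\widetilde{b}_m\,{\rm d}z_{m}^{p}\wedge \mathbf{K}\,{\rm d}z_{m}^{p},\qquad \kappa_{i}=\frac{1}{2}\sum_{k=1}^rb_k\,{\rm d}z_{i}^{k}\wedge \mathbf{L}\,{\rm d}z_{i}^{k},$$ and $\omega^{p+1},\kappa_{i+1}$ are defined analogously with $z_m^{p+1}$,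 $z_{i+1}^k$.
   Context: The equation is understood in the Stratonovich sense; $W$ is a $Q$-Wiener process on $H=L^2(\mathbb{R},\mathbb{R})$ with trace-class covariance $Q$ on a filtered probability space $(\Omega,\mathcal{F},P,\{\mathcal{F}_t\})$, with $Qe_j=\eta_je_j$ for an orthonormal basis $(e_j)$ and independent real Brownian motions $\beta_j$. The stochastic Runge-Kutta method: on a space-time cell $[x_i,x_{i+1}]\times[t_p,t_{p+1}]$ (with $x_{i+1}-x_i=h$, $t_{p+1}-t_p=\tau$) the unknowns are stage values $Z_m^k\in\mathbb{R}^n$ ($m=1,\dots,s$, $k=1,\dots,r$), discrete derivative values $\delta_tZ_m^k,\delta_xZ_m^k\in\mathbb{R}^n$, values $z_m^p,z_m^{p+1}\in\mathbb{R}^n$ (at time levels $t_p,t_{p+1}$ and spatial stage $m$) and $z_i^k,z_{i+1}^k\in\mathbb{R}^n$ (at spatial nodes $x_i,x_{i+1}$ and temporal stage $k$), related by $Z_{m}^{k}=z_{m}^{p}+\tau\sum_{j=1}^{r}a_{kj}\delta_tZ_{m}^{j}$, $z_{m}^{p+1}=z_{m}^{p}+\tau\sum_{k=1}^{r}b_{k}\delta_tZ_{m}^{k}$, $Z_{m}^{k}=z_{i}^{k}+h\sum_{n=1}^{s}\widetilde{a}_{mn}\delta_{x}Z_{n}^{k}$, $z_{i+1}^{k}=z_{i}^{k}+h\sum_{m=1}^{s}\widetilde{b}_{m}\delta_{x}Z_{m}^{k}$, $\tau\mathbf{K}\delta_{t}Z_{m}^{k}+\tau\mathbf{L}\delta_{x}Z_{m}^{k}=\tau\nabla_{z}S_1(Z_{m}^{k})+\nabla_{z}S_2(Z_{m}^{k})\Delta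 W_m^k$, where $\Delta W_m^k=\sum_{j=1}^\infty\sqrt{\eta_j}e_j(x_m)(\beta_j(t^{k+1})-\beta_j(t^{k}))$ is the Wiener increment at the stage point. Here ${\rm d}$ denotes the exterior differential in phase space (variations of the numerical solution with respect to initial data), and for a matrix $\mathbf{M}$, ${\rm d}z\wedge\mathbf{M}{\rm d}z=\sum_{a,b}\mathbf{M}_{ab}\,{\rm d}z_a\wedge{\rm d}z_b$. *)

From HB Require Import structures.
From mathcomp Require Import all_boot all_order all_algebra.
From mathcomp Require Import all_classical all_reals all_analysis.
Set Implicit Arguments. Unset Strict Implicit. Unset Printing Implicit Defensive.
Import Order.TTheory GRing.Theory Num.Theory.
Import numFieldNormedType.Exports.
Local Open Scope ring_scope.

Fixpoint iter_dderiv (R : realType) (V : normedModType R) (f : V -> R)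
  (vs : seq V) : V -> R :=
  match vs with
  | [::] => f
  | v :: vs' => fun x => 'D_v (iter_dderiv f vs') x
  end.

Definition smooth (R : realType) (V : normedModType R) (f : V -> R) : Prop :=
  forall (vs : seq V) (x : V), differentiable (iter_dderiv f vs) x.

Definition grad (R : realType) (n : nat) (S : 'cV[R]_n -> R) (z : 'cV[R]_n)
  : 'cV[R]_n :=
  \col_(a < n) 'D_(delta_mx a 0) S z.

(* The exterior differential of a phase-space quantity z (a function of the
   initial data theta in V) at theta is the linear map  'd z theta.
   For one-forms u, v with values in R^n (given as linear maps V -> R^n),
   (u /\ M v)(xi, eta) = sum_{a,b} M_ab (u_a(xi) v_b(eta) - u_a(eta) v_b(xi)),
   i.e.  dz /\ M dz = sum_{a,b} M_ab dz_a /\ dz_b  evaluated on (xi, eta). *)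
Definition wedgeM (R : realType) (V : normedModType R) (n : nat)
  (u : V -> 'cV[R]_n) (M : 'M[R]_n) (v : V -> 'cV[R]_n) (xi eta : V) : R :=
  \sum_(a < n) \sum_(b < n) M a b * (u xi a 0 * v eta b 0 - u eta a 0 * v xi b 0).

Definition form2 (R : realType) (V : normedModType R) (n : nat)
  (z : V -> 'cV[R]_n) (M : 'M[R]_n) (theta : V) (xi eta : V) : R :=
  wedgeM ('d z theta) M ('d z theta) xi eta.

(* Differentiating the Runge-Kutta relations with respect to the initial data
   gives the same relations for the variations dz.  Hence the classical
   identity for quadratic invariants of Runge-Kutta methods, valid exactly when
   b_i b_j = b_i a_ij + b_j a_ji, writes the change of omega over the time step
   (and of kappa over the space step) as a weighted sum, over the stage points,
   of dZ /\ K d(dtZ) (resp. dZ /\ L d(dxZ)).  At each stage point the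
   differentiated equation K d(dtZ) + L d(dxZ) = (S1'' + (dW/tau) S2'') dZ and
   the symmetry of second derivatives (Schwarz's theorem, a consequence of the
   mean value theorem) make the sum of these two wedges vanish. *)

From HB Require Import structures.
From mathcomp Require Import all_boot all_order all_algebra.
From mathcomp Require Import all_classical all_reals all_analysis.
From mathcomp Require Import ring.

Set Implicit Arguments.
Unset Strict Implicit.
Unset Printing Implicit Defensive.

Import Order.TTheory GRing.Theory Num.Theory.
Import numFieldNormedType.Exports.
Local Open Scope ring_scope.

Section SecondDerivatives.
Variables (R : realType) (U : normedModType R).
Implicit Types (f : U -> R) (x p u v : U).

Lemma is_derive_line f p u (s : R) : differentiable f (p + s *: u) ->
  is_derive s 1 (fun t : R => f (p + t *: u)) ('D_u f (p + s *: u)).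
Proof.
move=> df.
have dl : differentiable (fun t : R => p + t *: u) s.
  by apply/differentiableD => //; exact: differentiable_cst.
apply: DeriveDef; first exact/diff_derivable/differentiable_comp.
rewrite (deriveE _ (differentiable_comp dl df)) diff_comp // (deriveE _ df) /=.
rewrite diffD ?diff_cst //= add0r.
by rewrite (@diff_val _ _ _ _ _ _ _ (is_diff_scalel s u)) scale1r.
Qed.

Lemma MVT_from0 (g g' : R -> R) (t : R) : 0 < t ->
  (forall s : R, is_derive s 1 g (g' s)) ->
  exists2 c, 0 < c < t & g t - g 0 = t * g' c.
Proof.
move=> t0 dg.
have cg : {within `[0, t], continuous g}%classic.
  apply: continuous_subspaceT => s.
  by apply/differentiable_continuous/derivable1_diffP; have [] := dg s.
have [c + E] := MVT t0 (fun s _ => dg s) cg.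
by rewrite in_itv /= => c0t; exists c; rewrite // E subr0 mulrC.
Qed.

Definition second_difference f x (a b : U) :=
  f (x + a + b) - f (x + a) - f (x + b) + f x.

Lemma second_differenceC f x a b :
  second_difference f x a b = second_difference f x b a.
Proof. by rewrite /second_difference (addrAC x); ring. Qed.

Lemma second_difference_MVT f u v x (t : R) : 0 < t ->
  (forall y, differentiable f y) -> (forall y, differentiable ('D_u f) y) ->
  exists2 q, `|q - x| <= t * (`|u| + `|v|) &
    second_difference f x (t *: u) (t *: v) = t * t * 'D_v ('D_u f) q.
Proof.
move=> t0 df dDf.
(* The mean value theorem along u for the v-difference, then along v. *)
have [c1 /andP[c10 c1t] E1] := MVT_from0
  (g := fun s => f (x + t *: v + s *: u) - f (x + s *: u)) t0
  (fun s => is_deriveB (is_derive_line (df _)) (is_derive_line (df _))).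
have [c2 /andP[c20 c2t] E2] := MVT_from0
  (g := fun s => 'D_u f (x + c1 *: u + s *: v)) t0 (fun s => is_derive_line (dDf _)).
exists (x + c1 *: u + c2 *: v).
  rewrite addrAC (addrAC x) subrr add0r mulrDr.
  apply: (le_trans (ler_normD _ _)); rewrite !normrZ.
  by rewrite lerD // ler_wpM2r // ger0_norm ?ltW.
rewrite scale0r addr0 in E2; rewrite !scale0r !addr0 in E1.
rewrite -mulrA -E2 (addrAC x) -E1 /second_difference (addrAC x); ring.
Qed.

Lemma eq_of_common_values (G1 G2 : U -> R) x (c : R) : 0 <= c ->
  {for x, continuous G1} -> {for x, continuous G2} ->
  (forall t, 0 < t -> exists q1 q2,
     [/\ `|q1 - x| <= t * c, `|q2 - x| <= t * c & G1 q1 = G2 q2]) ->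
  G1 x = G2 x.
Proof.
move=> c0 cG1 cG2 common.
apply/eqP; rewrite -subr_eq0 -normr_le0; apply/ler_addgt0Pl => e e0; rewrite addr0.
have e20 : 0 < e / 2 by rewrite divr_gt0.
have /nbhs_ballP[d d0 near_x] : \forall y \near x,
    `|G1 x - G1 y| < e / 2 /\ `|G2 x - G2 y| < e / 2.
  near=> y; split; near: y.
  - exact: (cvgrPdist_lt _ _).1 cG1 _ e20.
  - exact: (cvgrPdist_lt _ _).1 cG2 _ e20.
have c10 : 0 < c + 1 by rewrite ltr_wpDl.
have [q1 [q2 [xq1 xq2 E]]] := common (d / (c + 1)) (divr_gt0 d0 c10).
have tc : d / (c + 1) * c < d by rewrite mulrAC ltr_pdivrMr // ltr_pM2l // ltrDl.
have ball_q q : `|q - x| <= d / (c + 1) * c -> ball x d q.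
  by move=> xq; rewrite -ball_normE /= distrC (le_lt_trans xq).
have [lt1 _] := near_x _ (ball_q _ xq1).
have [_ lt2] := near_x _ (ball_q _ xq2).
have -> : G1 x - G2 x = (G1 x - G1 q1) - (G2 x - G2 q2) by rewrite E opprB addrA subrK.
by rewrite ltW // (le_lt_trans (ler_normB _ _)) // [e]splitr ltrD.
Unshelve. all: by end_near.
Qed.

Lemma derive_comm f u v x :
  (forall y, differentiable f y) ->
  (forall y, differentiable ('D_u f) y) -> (forall y, differentiable ('D_v f) y) ->
  (forall y, differentiable ('D_v ('D_u f)) y) ->
  (forall y, differentiable ('D_u ('D_v f)) y) ->
  'D_v ('D_u f) x = 'D_u ('D_v f) x.
Proof.
move=> df dDuf dDvf dDvu dDuv.
have c0 : 0 <= `|u| + `|v| by rewrite addr_ge0.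
apply: (eq_of_common_values c0 (differentiable_continuous (dDvu x))
                               (differentiable_continuous (dDuv x))) => t t0.
have [q1 xq1 E1] := second_difference_MVT v x t0 df dDuf.
have [q2 xq2 E2] := second_difference_MVT u x t0 df dDvf.
exists q1, q2; split; [exact: xq1 | by rewrite (addrC `|u|) |].
have tt0 : t * t != 0 by rewrite mulf_neq0 // gt_eqF.
by have := second_differenceC f x (t *: u) (t *: v); rewrite E1 E2 => /(mulfI tt0).
Qed.

End SecondDerivatives.

Section LinearCombinations.
Variables (R : realType) (V W : normedModType R).

Lemma is_diff_sum k (F dF : 'I_k -> V -> W) (x : V) :
  (forall i, is_diff x (F i) (dF i)) -> is_diff x (\sum_i F i) (\sum_i dF i).
Proof.
move=> dFi; elim/big_ind2 : _ => // [|f df g dg]; first exact: is_diff_cst.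
exact: is_diffD.
Qed.

Lemma diff_lincomb k (f g : V -> W) (c : R) (w : 'I_k -> R) (F : 'I_k -> V -> W)
    (x d : V) :
  (forall y, f y = g y + c *: \sum_(i < k) w i *: F i y) ->
  differentiable g x -> (forall i, differentiable (F i) x) ->
  'd f x d = 'd g x d + c *: \sum_(i < k) w i *: 'd (F i) x d.
Proof.
move=> fE dg dF.
have -> : f = g + c *: \sum_i w i *: F i.
  by apply/funext => y; rewrite fE fct_sumE.
have dsum := is_diff_sum (fun i => is_diffZ (w i) (differentiableP (dF i))).
have dlin := is_diffD (differentiableP dg) (is_diffZ c dsum).
by rewrite (@diff_val _ _ _ _ _ _ _ dlin) /= fct_sumE.
Qed.

End LinearCombinations.

Section BilinearForm.
Variables (R : comRingType) (n : nat).
Implicit Types (M : 'M[R]_n) (x y z : 'cV[R]_n).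

Definition bil M x y : R := (x^T *m M *m y) 0 0.

Lemma bil_is_linear M x : linear_for *%R (bil M x).
Proof. by move=> c y z; rewrite /bil mulmxDr -scalemxAr !mxE. Qed.

HB.instance Definition _ M x :=
  @GRing.isLinear.Build _ _ _ _ (bil M x) (bil_is_linear M x).

Lemma bilDr M x y z : bil M x (y + z) = bil M x y + bil M x z.
Proof. exact: linearD. Qed.

Lemma bilZr M c x y : bil M x (c *: y) = c * bil M x y.
Proof. exact: linearZ. Qed.

Lemma bil_sumr M k (c : 'I_k -> R) (F : 'I_k -> 'cV[R]_n) x :
  bil M x (\sum_(i < k) c i *: F i) = \sum_(i < k) c i * bil M x (F i).
Proof. by rewrite linear_sum; apply: eq_bigr => i _; rewrite linearZ. Qed.

Lemma bil_tr M x y : bil M x y = bil M^T y x.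
Proof. by rewrite /bil -[in RHS](trmxK x) -!trmx_mul [RHS]mxE mulmxA. Qed.

Lemma bilDl M x y z : bil M (x + y) z = bil M x z + bil M y z.
Proof. by rewrite bil_tr bilDr -!bil_tr. Qed.

Lemma bilZl M c x y : bil M (c *: x) y = c * bil M x y.
Proof. by rewrite bil_tr bilZr -bil_tr. Qed.

Lemma bil_suml M k (c : 'I_k -> R) (F : 'I_k -> 'cV[R]_n) y :
  bil M (\sum_(i < k) c i *: F i) y = \sum_(i < k) c i * bil M (F i) y.
Proof. by rewrite bil_tr bil_sumr; apply: eq_bigr => i _; rewrite -bil_tr. Qed.

Lemma bil_skew M x y : M^T = - M -> bil M x y = - bil M y x.
Proof. by move=> skM; rewrite bil_tr skM /bil mulmxN mulNmx mxE. Qed.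

Lemma bilE M x y : bil M x y = \sum_(a < n) \sum_(b < n) M a b * (x a 0 * y b 0).
Proof.
rewrite /bil mxE; under eq_bigr do rewrite mxE big_distrl.
rewrite exchange_big; apply: eq_bigr => a _; apply: eq_bigr => b _ /=.
by rewrite !mxE mulrCA mulrA.
Qed.

Lemma bil1 x y : bil 1%:M x y = \sum_(a < n) x a 0 * y a 0.
Proof. by rewrite /bil mulmx1 mxE; apply: eq_bigr => a _; rewrite mxE. Qed.

Lemma bil1_mul M x y : bil 1%:M x (M *m y) = bil M x y.
Proof. by rewrite /bil mulmx1 mulmxA. Qed.

Lemma bil_rk_increment M k (b : 'I_k -> R) (a : 'M[R]_k) (t : R)
    P Q P1 Q1 (ZP ZQ TP TQ : 'I_k -> 'cV[R]_n) :
  (forall i j, b i * b j - b i * a i j - b j * a j i = 0) ->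
  P1 = P + t *: \sum_(i < k) b i *: TP i ->
  Q1 = Q + t *: \sum_(i < k) b i *: TQ i ->
  (forall i, ZP i = P + t *: \sum_(j < k) a i j *: TP j) ->
  (forall i, ZQ i = Q + t *: \sum_(j < k) a i j *: TQ j) ->
  bil M P1 Q1 - bil M P Q
  = t * \sum_(i < k) b i * (bil M (ZP i) (TQ i) + bil M (TP i) (ZQ i)).
Proof.
move=> cond -> -> ZPE ZQE.
pose beta i j := bil M (TP i) (TQ j).
have stageP i : bil M (ZP i) (TQ i) = bil M P (TQ i) + t * \sum_j a i j * beta j i.
  by rewrite ZPE bilDl bilZl bil_suml.
have stageQ i : bil M (TP i) (ZQ i) = bil M (TP i) Q + t * \sum_j a i j * beta i j.
  by rewrite ZQE bilDr bilZr bil_sumr.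
(* The t^2 terms cancel by the symplecticity condition on (a, b). *)
have cancel : \sum_i b i * bil M (\sum_j b j *: TP j) (TQ i)
    = \sum_i b i * \sum_j a i j * beta j i + \sum_i b i * \sum_j a i j * beta i j.
  under eq_bigr do rewrite bil_suml mulr_sumr.
  under [X in _ = _ + X]eq_bigr do rewrite mulr_sumr.
  rewrite [X in _ = _ + X]exchange_big -big_split; apply: eq_bigr => i _ /=.
  rewrite mulr_sumr -big_split; apply: eq_bigr => j _ /=.
  apply/eqP; rewrite -subr_eq0 -(mulr0 (beta j i)) -(cond i j); apply/eqP.
  rewrite /beta; ring.
rewrite bilDl !bilDr !bilZl !bilZr bil_suml !bil_sumr cancel.
under [X in _ = _ * X]eq_bigr
  do rewrite stageP stageQ !mulrDr (mulrCA (b _) t) (mulrCA (b _) t).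
rewrite !big_split -!mulr_sumr /=; ring.
Qed.

Lemma bil_rk_increment_skew M k (b : 'I_k -> R) (a : 'M[R]_k) (t : R)
    P Q P1 Q1 (ZP ZQ TP TQ : 'I_k -> 'cV[R]_n) :
  M^T = - M ->
  (forall i j, b i * b j - b i * a i j - b j * a j i = 0) ->
  P1 = P + t *: \sum_(i < k) b i *: TP i ->
  Q1 = Q + t *: \sum_(i < k) b i *: TQ i ->
  (forall i, ZP i = P + t *: \sum_(j < k) a i j *: TP j) ->
  (forall i, ZQ i = Q + t *: \sum_(j < k) a i j *: TQ j) ->
  bil M P1 Q1 - bil M P Q
  = t * \sum_(i < k) b i * (bil M (ZP i) (TQ i) - bil M (ZQ i) (TP i)).
Proof.
move=> skM cond P1E Q1E ZPE ZQE; rewrite (bil_rk_increment M cond P1E Q1E ZPE ZQE).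
by congr (_ * _); apply: eq_bigr => i _; rewrite (bil_skew (TP i)).
Qed.

End BilinearForm.

Section Variations.
Variables (R : realType) (V : normedModType R) (n : nat).
Implicit Types (M : 'M[R]_n) (S : 'cV[R]_n -> R).

Lemma wedgeM_bil (u v : V -> 'cV[R]_n) M xi eta :
  wedgeM u M v xi eta = bil M (u xi) (v eta) - bil M (u eta) (v xi).
Proof.
rewrite /wedgeM !bilE -sumrB; apply: eq_bigr => a _.
by rewrite -sumrB; apply: eq_bigr => b _; rewrite mulrBr.
Qed.

Lemma form2_skew (z : V -> 'cV[R]_n) M theta xi eta : M^T = - M ->
  form2 z M theta xi eta = 2 * bil M ('d z theta xi) ('d z theta eta).
Proof.
by move=> skM; rewrite /form2 wedgeM_bil [X in _ - X]bil_skew // opprK; ring.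
Qed.

Lemma bil_differentiable M c y : differentiable (bil M c) y.
Proof.
have -> : bil M c = \sum_(b < n) (c^T *m M) 0 b *: (fun y : 'cV[R]_n => y b 0).
  by apply/funext => z; rewrite fct_sumE /bil mxE; apply: eq_bigr.
apply: differentiable_sum => b.
exact/differentiableZ/differentiable_coord.
Qed.

Lemma is_diff_bil M c (T : V -> 'cV[R]_n) x :
  differentiable T x -> is_diff x (bil M c \o T) (bil M c \o 'd T x).
Proof.
move=> dT; have bl : linear (bil M c : 'cV[R]_n -> R) by exact: bil_is_linear.
pose B : {linear 'cV[R]_n -> R} :=
  HB.pack (bil M c) (GRing.isLinear.Build _ _ _ _ _ bl).
have cB : continuous B.
  by move=> y; exact: differentiable_continuous (bil_differentiable M c y).
apply: DiffDef; first exact: differentiable_comp (bil_differentiable M c _).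
have dB : 'd (bil M c) (T x) = bil M c :> ('cV[R]_n -> R) := diff_lin _ cB.
by rewrite diff_comp ?dB //; exact: bil_differentiable.
Qed.

Lemma is_diff_derive_comp S c (Z : V -> 'cV[R]_n) x :
  differentiable Z x -> differentiable ('D_c S) (Z x) ->
  is_diff x ('D_c S \o Z) (fun d => 'D_('d Z x d) ('D_c S) (Z x)).
Proof.
move=> dZ dS; apply: DiffDef; first exact: differentiable_comp.
by rewrite diff_comp //; apply/funext => d /=; rewrite deriveE.
Qed.

Lemma col_sum_delta (c : 'cV[R]_n) : c = \sum_(a < n) c a 0 *: delta_mx a 0.
Proof.
by rewrite {1}(matrix_sum_delta c); apply: eq_bigr => a _; rewrite big_ord1.
Qed.

Lemma bil1_grad S c z : differentiable S z -> bil 1%:M c (grad S z) = 'D_c S z.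
Proof.
move=> dS; rewrite bil1 deriveE // [in RHS](col_sum_delta c) linear_sum.
by apply: eq_bigr => a _; rewrite linearZ mxE -deriveE.
Qed.

Lemma smooth_derive_comm S u v z : smooth S -> 'D_v ('D_u S) z = 'D_u ('D_v S) z.
Proof.
move=> sS; apply: derive_comm => y.
- exact: (sS [::] y).
- exact: (sS [:: u] y).
- exact: (sS [:: v] y).
- exact: (sS [:: v; u] y).
- exact: (sS [:: u; v] y).
Qed.

Lemma form2_rk_increment M k (b : 'I_k -> R) (a : 'M[R]_k) (t : R)
    (z z1 : V -> 'cV[R]_n) (Zs Ts : 'I_k -> V -> 'cV[R]_n) theta xi eta :
  M^T = - M ->
  (forall i j, b i * b j - b i * a i j - b j * a j i = 0) ->
  differentiable z theta -> (forall i, differentiable (Ts i) theta) ->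
  (forall y, z1 y = z y + t *: \sum_(i < k) b i *: Ts i y) ->
  (forall i y, Zs i y = z y + t *: \sum_(j < k) a i j *: Ts j y) ->
  form2 z1 M theta xi eta - form2 z M theta xi eta
  = 2 * t * \sum_(i < k) b i * wedgeM ('d (Zs i) theta) M ('d (Ts i) theta) xi eta.
Proof.
move=> skM cond dz dT z1E ZsE.
rewrite !form2_skew // -mulrBr -mulrA; congr (_ * _).
have := bil_rk_increment_skew skM cond (diff_lincomb xi z1E dz dT)
  (diff_lincomb eta z1E dz dT) (fun i => diff_lincomb xi (ZsE i) dz dT)
  (fun i => diff_lincomb eta (ZsE i) dz dT).
move=> ->; apply: congr1; apply: eq_bigr => i _.
by rewrite wedgeM_bil.
Qed.

Section VariationalEquation.
Variables (K L : 'M[R]_n) (S1 S2 : 'cV[R]_n -> R) (tau w : R).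
Variables (T X Z : V -> 'cV[R]_n) (x : V).
Hypotheses (sS1 : smooth S1) (sS2 : smooth S2) (tau_neq0 : tau != 0).
Hypotheses (dT : differentiable T x) (dX : differentiable X x).
Hypothesis dZ : differentiable Z x.
Hypothesis eqn : forall y,
  tau *: (K *m T y) + tau *: (L *m X y) = tau *: grad S1 (Z y) + w *: grad S2 (Z y).

Lemma eqn_bil c y :
  tau * (bil K c (T y) + bil L c (X y)) = tau * 'D_c S1 (Z y) + w * 'D_c S2 (Z y).
Proof.
have := congr1 (bil 1%:M c) (eqn y).
rewrite !bilDr !bilZr !bil1_mul !bil1_grad ?mulrDr //.
- exact: (sS2 [::]).
- exact: (sS1 [::]).
Qed.

Lemma variational_eqn_bil c d :
  tau * (bil K c ('d T x d) + bil L c ('d X x d))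
  = tau * 'D_('d Z x d) ('D_c S1) (Z x) + w * 'D_('d Z x d) ('D_c S2) (Z x).
Proof.
have dS1 : differentiable ('D_c S1) (Z x) := sS1 [:: c] (Z x).
have dS2 : differentiable ('D_c S2) (Z x) := sS2 [:: c] (Z x).
have E : tau *: ((bil K c \o T) + (bil L c \o X))
         = tau *: ('D_c S1 \o Z) + w *: ('D_c S2 \o Z).
  by apply/funext => y; rewrite !fctE; exact: (eqn_bil c y).
have dl := is_diffZ tau (is_diffD (is_diff_bil K c dT) (is_diff_bil L c dX)).
have dr := is_diffD (is_diffZ tau (is_diff_derive_comp dZ dS1))
                    (is_diffZ w (is_diff_derive_comp dZ dS2)).
have := congr1 (fun f => 'd f x d) E.
by rewrite (@diff_val _ _ _ _ _ _ _ dl) (@diff_val _ _ _ _ _ _ _ dr) !fctE.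
Qed.

Lemma wedgeM_variational xi eta :
  wedgeM ('d Z x) K ('d T x) xi eta + wedgeM ('d Z x) L ('d X x) xi eta = 0.
Proof.
rewrite !wedgeM_bil addrACA -opprD; apply/eqP; rewrite subr_eq0; apply/eqP.
apply: (mulfI tau_neq0).
(* Both sides are now second derivatives of S1, S2; Schwarz swaps them. *)
rewrite (variational_eqn_bil ('d Z x xi) eta) (variational_eqn_bil ('d Z x eta) xi).
by rewrite (smooth_derive_comm _ _ _ sS1) (smooth_derive_comm _ _ _ sS2).
Qed.

End VariationalEquation.

End Variations.

Section SpaceTimeCell.
Variables (R : realType) (n r s : nat) (K L : 'M[R]_n) (S1 S2 : 'cV[R]_n -> R).
Variables (a : 'M[R]_r) (b : 'I_r -> R) (ta : 'M[R]_s) (bt : 'I_s -> R) (tau h : R).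
Variables (V : normedModType R) (dW : 'I_s -> 'I_r -> R).
Variables (Z dtZ dxZ : 'I_s -> 'I_r -> V -> 'cV[R]_n).
Variables (zp zp1 : 'I_s -> V -> 'cV[R]_n) (zi zi1 : 'I_r -> V -> 'cV[R]_n).
Hypotheses (skK : K^T = - K) (skL : L^T = - L) (sS1 : smooth S1) (sS2 : smooth S2).
Hypotheses (tau_neq0 : tau != 0) (h_neq0 : h != 0).
Hypothesis condb : forall k j : 'I_r, b k * b j - b k * a k j - b j * a j k = 0.
Hypothesis condbt : forall m l : 'I_s, bt m * bt l - bt m * ta m l - bt l * ta l m = 0.
Hypotheses (dZ : forall m k theta, differentiable (Z m k) theta)
  (ddtZ : forall m k theta, differentiable (dtZ m k) theta)
  (ddxZ : forall m k theta, differentiable (dxZ m k) theta)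
  (dzp : forall m theta, differentiable (zp m) theta)
  (dzi : forall k theta, differentiable (zi k) theta).
Hypotheses
  (ZpE : forall m k theta,
     Z m k theta = zp m theta + tau *: \sum_(j < r) a k j *: dtZ m j theta)
  (zp1E : forall m theta,
     zp1 m theta = zp m theta + tau *: \sum_(k < r) b k *: dtZ m k theta)
  (ZiE : forall m k theta,
     Z m k theta = zi k theta + h *: \sum_(l < s) ta m l *: dxZ l k theta)
  (zi1E : forall k theta,
     zi1 k theta = zi k theta + h *: \sum_(m < s) bt m *: dxZ m k theta).
Hypothesis eqn : forall m k theta,
  tau *: (K *m dtZ m k theta) + tau *: (L *m dxZ m k theta)
  = tau *: grad S1 (Z m k theta) + dW m k *: grad S2 (Z m k theta).
Variables (theta xi eta : V).

Let omega (z : 'I_s -> V -> 'cV[R]_n) :=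
  2^-1 * \sum_(m < s) bt m * form2 (z m) K theta xi eta.
Let kappa (z : 'I_r -> V -> 'cV[R]_n) :=
  2^-1 * \sum_(k < r) b k * form2 (z k) L theta xi eta.
Let wK m k := wedgeM ('d (Z m k) theta) K ('d (dtZ m k) theta) xi eta.
Let wL m k := wedgeM ('d (Z m k) theta) L ('d (dxZ m k) theta) xi eta.

Lemma omega_increment :
  omega zp1 - omega zp = tau * \sum_(m < s) \sum_(k < r) bt m * b k * wK m k.
Proof.
rewrite /omega -mulrBr -sumrB mulr_sumr [RHS]mulr_sumr; apply: eq_bigr => m _.
have := form2_rk_increment xi eta skK condb (dzp m theta) (fun k => ddtZ m k theta)
  (zp1E m) (ZpE m).
rewrite -mulrBr => ->.
under [X in _ = _ * X]eq_bigr do rewrite -mulrA.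
rewrite -mulr_sumr /wK; set S := \sum_(k < r) _.
by field.
Qed.

Lemma kappa_increment :
  kappa zi1 - kappa zi = h * \sum_(m < s) \sum_(k < r) bt m * b k * wL m k.
Proof.
rewrite /kappa -mulrBr -sumrB mulr_sumr exchange_big [RHS]mulr_sumr.
apply: eq_bigr => k _.
have := form2_rk_increment xi eta skL condbt (dzi k theta) (fun m => ddxZ m k theta)
  (zi1E k) (fun m => ZiE m k).
rewrite -mulrBr => ->.
under [X in _ = _ * X]eq_bigr do rewrite (mulrC (bt _)) -mulrA.
rewrite -mulr_sumr /wL; set S := \sum_(m < s) _.
by field.
Qed.

Lemma wedgeKL_eq0 m k : wK m k + wL m k = 0.
Proof.
exact: (wedgeM_variational sS1 sS2 tau_neq0 (ddtZ m k theta) (ddxZ m k theta)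
  (dZ m k theta) (eqn m k)).
Qed.

Lemma cell_conservation :
  (omega zp1 - omega zp) / tau + (kappa zi1 - kappa zi) / h = 0.
Proof.
rewrite omega_increment kappa_increment (mulrC tau) (mulrC h) !mulfK // -big_split.
apply: big1 => m _; rewrite -big_split; apply: big1 => k _ /=.
by rewrite -mulrDr wedgeKL_eq0 mulr0.
Qed.

End SpaceTimeCell.

Theorem mainTheorem1
  (R : realType) (n r s : nat) (K L : 'M[R]_n) (S1 S2 : 'cV[R]_n -> R)
  (a : 'M[R]_r) (b : 'I_r -> R) (ta : 'M[R]_s) (bt : 'I_s -> R)
  (tau h : R)
  (V : normedModType R)
  (dW : 'I_s -> 'I_r -> R)
  (Z dtZ dxZ : 'I_s -> 'I_r -> V -> 'cV[R]_n)
  (zp zp1 : 'I_s -> V -> 'cV[R]_n)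
  (zi zi1 : 'I_r -> V -> 'cV[R]_n) :
  (2 <= n)%N -> (0 < r)%N -> (0 < s)%N ->
  K^T = - K -> L^T = - L ->
  smooth S1 -> smooth S2 ->
  0 < tau -> 0 < h ->
  (forall k j : 'I_r, b k * b j - b k * a k j - b j * a j k = 0) ->
  (forall m l : 'I_s, bt m * bt l - bt m * ta m l - bt l * ta l m = 0) ->
  (* all quantities are differentiable functions of the initial data *)
  (forall m k theta, differentiable (Z m k) theta) ->
  (forall m k theta, differentiable (dtZ m k) theta) ->
  (forall m k theta, differentiable (dxZ m k) theta) ->
  (forall m theta, differentiable (zp m) theta) ->
  (forall m theta, differentiable (zp1 m) theta) ->
  (forall k theta, differentiable (zi k) theta) ->
  (forall k theta, differentiable (zi1 k) theta) ->
  (* the stochastic Runge-Kutta relations on the cell *)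
  (forall m k theta,
     Z m k theta = zp m theta + tau *: \sum_(j < r) a k j *: dtZ m j theta) ->
  (forall m theta,
     zp1 m theta = zp m theta + tau *: \sum_(k < r) b k *: dtZ m k theta) ->
  (forall m k theta,
     Z m k theta = zi k theta + h *: \sum_(l < s) ta m l *: dxZ l k theta) ->
  (forall k theta,
     zi1 k theta = zi k theta + h *: \sum_(m < s) bt m *: dxZ m k theta) ->
  (forall m k theta,
     tau *: (K *m dtZ m k theta) + tau *: (L *m dxZ m k theta)
     = tau *: grad S1 (Z m k theta) + dW m k *: grad S2 (Z m k theta)) ->
  (* conclusion: discrete stochastic multi-symplectic conservation law *)
  forall theta xi eta : V,
    let omega (z : 'I_s -> V -> 'cV[R]_n) :=
      2^-1 * \sum_(m < s) bt m * form2 (z m) K theta xi eta in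
    let kappa (z : 'I_r -> V -> 'cV[R]_n) :=
      2^-1 * \sum_(k < r) b k * form2 (z k) L theta xi eta in
    (omega zp1 - omega zp) / tau + (kappa zi1 - kappa zi) / h = 0.
Proof.
move=> _ _ _ skK skL sS1 sS2 tau_gt0 h_gt0 condb condbt dZ ddtZ ddxZ dzp _ dzi _
  ZpE zp1E ZiE zi1E eqn theta xi eta.
exact: (cell_conservation skK skL sS1 sS2 (lt0r_neq0 tau_gt0) (lt0r_neq0 h_gt0)
  condb condbt dZ ddtZ ddxZ dzp dzi ZpE zp1E ZiE zi1E eqn).
Qed.
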